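(* Let $F$ be a field and $n\ge1$ an integer. There is a universal closed formula $\varphi_n$ in the signature of unital $F$-algebras such that for every unital locally matrix algebra $A$ over $F$, $\varphi_n$ holds in $A$ if and only if $n\notin D(A)$.
   Context: All algebras are associative $F$-algebras with identity $1$. An algebra $A$ is a (unital) locally matrix algebra if every finite collection of elements of $A$ lies in a subalgebra $B$ with $1_A\in B\subseteq A$ and $B\cong M_k(F)$ for some $k\ge1$. $D(A)$ denotes the set of positive integers $n$ such that $A$ has a subalgebra $A'$ with $1_A\in A'$ and $A'\cong M_n(F)$. The signature of unital $F$-algebras consists of addition, multiplication, multiplication by each scalar of $F$, and constants $0$ and $1$. *)

From HB Require Import structures.
From mathcomp Require Import all_boot all_order all_algebra.
Set Implicit Arguments. Unset Strict Implicit. Unset Printing Implicit Defensive.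
Import GRing.Theory.
Local Open Scope ring_scope.

Inductive alg_term (F : Type) : Type :=
  | TVar of nat
  | TZero
  | TOne
  | TAdd of alg_term F & alg_term F
  | TMul of alg_term F & alg_term F
  | TScale of F & alg_term F.

Inductive qf_formula (F : Type) : Type :=
  | FEq of alg_term F & alg_term F
  | FTrue
  | FFalse
  | FNot of qf_formula F
  | FAnd of qf_formula F & qf_formula F
  | FOr of qf_formula F & qf_formula F.

Section Semantics.
Variables (F : fieldType) (A : algType F).

Fixpoint eval_term (e : nat -> A) (t : alg_term F) : A :=
  match t with
  | TVar i => e i
  | TZero => 0
  | TOne => 1
  | TAdd t1 t2 => eval_term e t1 + eval_term e t2
  | TMul t1 t2 => eval_term e t1 * eval_term e t2
  | TScale c t1 => c *: eval_term e t1
  end.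

Fixpoint eval_qf (e : nat -> A) (f : qf_formula F) : Prop :=
  match f with
  | FEq t1 t2 => eval_term e t1 = eval_term e t2
  | FTrue => True
  | FFalse => False
  | FNot g => ~ eval_qf e g
  | FAnd g h => eval_qf e g /\ eval_qf e h
  | FOr g h => eval_qf e g \/ eval_qf e h
  end.

(* A universal closed formula is the universal closure of a quantifier-free
   formula psi (over all of its, finitely many, free variables); it holds in A
   iff psi holds under every assignment of the variables. *)
Definition holds_universal (psi : qf_formula F) : Prop :=
  forall e : nat -> A, eval_qf e psi.

(* f : M_k(F) -> A is an injective unital F-algebra homomorphism, i.e. its
   image is a subalgebra B with 1_A in B and B isomorphic to M_k(F). *)
Definition unital_mx_embedding (k : nat) (f : 'M[F]_k.+1 -> A) : Prop :=
  [/\ injective f,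
      forall (a : F) (u v : 'M[F]_k.+1), f (a *: u + v) = a *: f u + f v,
      forall u v : 'M[F]_k.+1, f (u * v) = f u * f v
    & f 1 = 1].

Definition locally_matrix : Prop :=
  forall s : seq A, exists k (f : 'M[F]_k.+1 -> A),
    unital_mx_embedding f /\ {in s, forall x, exists u, f u = x}.

Definition in_D (n : nat) : Prop :=
  match n with
  | 0 => False
  | m.+1 => exists f : 'M[F]_m.+1 -> A, unital_mx_embedding f
  end.

End Semantics.

From mathcomp Require Import all_boot all_order all_algebra.
Set Implicit Arguments.
Unset Strict Implicit.
Unset Printing Implicit Defensive.

Import GRing.Theory.
Local Open Scope ring_scope.

(* In a nonzero algebra A, unital copies of M_n(F) are the same thing as
   systems of n x n matrix units e_ij (e_ij e_kl = delta_jk e_il and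
   sum_i e_ii = 1): an embedding sends the elementary matrices to matrix units,
   and conversely u |-> sum_ij u_ij e_ij is an embedding, injective because
   u_ij 1 = sum_k e_ki x e_jk for its image x.  Having matrix units is an
   existential sentence, so its negation is the universal formula phi_n.  Local
   matrixness only serves to guarantee that A is nonzero. *)

Section MatrixUnits.
Variables (F : fieldType) (A : algType F) (n : nat).
Local Notation N := n.+1.

Definition matrix_units (E : 'I_N -> 'I_N -> A) : Prop :=
  (forall i j k l, E i j * E k l = if j == k then E i l else 0)
  /\ \sum_i E i i = 1.

Section UnitalEmbedding.
Variable f : 'M[F]_N -> A.
Hypothesis f_emb : unital_mx_embedding f.

Lemma mx_embeddingD u v : f (u + v) = f u + f v.
Proof. by case: f_emb => _ f_lin _ _; rewrite -[u]scale1r f_lin !scale1r. Qed.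

Lemma mx_embedding0 : f 0 = 0.
Proof.
case: f_emb => _ f_lin _ _; have := f_lin (-1) 0 0.
by rewrite scaler0 addr0 scaleN1r addNr.
Qed.

Lemma mx_embedding_nontrivial : (1 : A) != 0.
Proof.
case: f_emb => f_inj _ _ f1; apply/eqP => A10.
have /f_inj/eqP : f 1 = f 0 by rewrite f1 mx_embedding0.
by rewrite oner_eq0.
Qed.

Lemma matrix_units_delta : matrix_units (fun i j => f (delta_mx i j)).
Proof.
case: (f_emb) => _ _ f_mul f1; split=> [i j k l|].
  rewrite -f_mul -mulmxE mul_delta_mx_cond.
  by case: (j == k); rewrite ?mx_embedding0.
rewrite -f1 (_ : 1 = \sum_i delta_mx i i); last exact: mx1_sum_delta.
by rewrite (big_morph f mx_embeddingD mx_embedding0).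
Qed.

End UnitalEmbedding.

Section FromMatrixUnits.
Variable E : 'I_N -> 'I_N -> A.
Hypothesis E_units : matrix_units E.

Definition mx_of_units (u : 'M[F]_N) : A := \sum_i \sum_j u i j *: E i j.

Lemma matrix_unit_mul_mx_of_units k i (u : 'M[F]_N) :
  E k i * mx_of_units u = \sum_j u i j *: E k j.
Proof.
rewrite /mx_of_units mulr_sumr (bigD1 i) //= [X in _ + X]big1 ?addr0.
  rewrite mulr_sumr; apply: eq_bigr => j _.
  by rewrite -scalerAr E_units.1 eqxx.
move=> a /negbTE ai; rewrite mulr_sumr big1 // => j _.
by rewrite -scalerAr E_units.1 eq_sym ai scaler0.
Qed.

Lemma mx_of_units_entry (u : 'M[F]_N) i j :
  u i j *: (1 : A) = \sum_k E k i * mx_of_units u * E j k.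
Proof.
rewrite -E_units.2 scaler_sumr; apply: eq_bigr => k _.
rewrite matrix_unit_mul_mx_of_units mulr_suml.
rewrite (bigD1 j) //= [X in _ + X]big1 ?addr0.
  by rewrite -scalerAl E_units.1 eqxx.
by move=> b /negbTE bj; rewrite -scalerAl E_units.1 bj scaler0.
Qed.

Lemma mx_of_units_is_linear a (u v : 'M[F]_N) :
  mx_of_units (a *: u + v) = a *: mx_of_units u + mx_of_units v.
Proof.
rewrite scaler_sumr -big_split; apply: eq_bigr => i _.
rewrite scaler_sumr -big_split; apply: eq_bigr => j _.
by rewrite !mxE scalerDl scalerA.
Qed.

Lemma mx_of_units_is_multiplicative (u v : 'M[F]_N) :
  mx_of_units (u * v) = mx_of_units u * mx_of_units v.
Proof.
rewrite {2}/mx_of_units mulr_suml; apply: eq_bigr => i _; rewrite mulr_suml.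
under [RHS]eq_bigr => k _ do
  rewrite -scalerAl matrix_unit_mul_mx_of_units scaler_sumr.
rewrite exchange_big /=; apply: eq_bigr => j _.
rewrite -mulmxE mxE scaler_suml; apply: eq_bigr => k _.
by rewrite scalerA.
Qed.

Lemma mx_of_units1 : mx_of_units 1 = 1.
Proof.
rewrite -E_units.2; apply: eq_bigr => i _.
rewrite (bigD1 i) //= [X in _ + X]big1 ?addr0.
  by rewrite mxE eqxx scale1r.
by move=> j /negbTE ji; rewrite mxE eq_sym ji scale0r.
Qed.

Hypothesis A_nontrivial : (1 : A) != 0.

Lemma mx_of_units_inj : injective mx_of_units.
Proof.
move=> u v uv; apply/matrixP => i j; apply/eqP.
have /eqP := mx_of_units_entry u i j; rewrite uv -mx_of_units_entry.
by rewrite -subr_eq0 -scalerBl scaler_eq0 (negbTE A_nontrivial) orbF subr_eq0.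
Qed.

Lemma mx_of_units_embedding : unital_mx_embedding mx_of_units.
Proof.
split; [exact: mx_of_units_inj | exact: mx_of_units_is_linear
       | exact: mx_of_units_is_multiplicative | exact: mx_of_units1].
Qed.

End FromMatrixUnits.

Lemma in_D_matrix_units :
  (1 : A) != 0 -> in_D A N <-> exists E, matrix_units E.
Proof.
move=> A_nontrivial; split=> [[f f_emb] | [E E_units]].
  by exists (fun i j => f (delta_mx i j)); exact: matrix_units_delta.
by exists (mx_of_units E); exact: mx_of_units_embedding.
Qed.

End MatrixUnits.

Section MatrixUnitsFormula.
Variables (F : fieldType) (n : nat).
Local Notation N := n.+1.

Definition qf_all {I : finType} (P : I -> qf_formula F) : qf_formula F :=
  foldr (fun i f => FAnd (P i) f) (FTrue F) (index_enum I).

Definition term_sum {I : finType} (t : I -> alg_term F) : alg_term F :=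
  foldr (fun i s => TAdd (t i) s) (TZero F) (index_enum I).

Definition unit_var (i j : 'I_N) : alg_term F := TVar F (i * N + j).

Definition matrix_units_formula : qf_formula F :=
  FAnd (qf_all (fun i => qf_all (fun j => qf_all (fun k => qf_all (fun l =>
          FEq (TMul (unit_var i j) (unit_var k l))
              (if j == k then unit_var i l else TZero F))))))
       (FEq (term_sum (fun i => unit_var i i)) (TOne F)).

Variable A : algType F.

Lemma eval_qf_all (I : finType) (e : nat -> A) (P : I -> qf_formula F) :
  eval_qf e (qf_all P) <-> forall i, eval_qf e (P i).
Proof.
suff eval_foldr s : eval_qf e (foldr (fun i f => FAnd (P i) f) (FTrue F) s)
                    <-> {in s, forall i, eval_qf e (P i)}.
  rewrite /qf_all; split=> [/eval_foldr Ps i | Ps]; first exact: Ps.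
  by apply/eval_foldr.
elim: s => [|x s IHs] /=; first by [].
split=> [[Px /IHs Ps] i | Ps]; first by rewrite inE => /predU1P[-> | /Ps].
split; first by apply: Ps; rewrite mem_head.
by apply/IHs => i si; apply: Ps; rewrite inE si orbT.
Qed.

Lemma eval_term_sum (I : finType) (e : nat -> A) (t : I -> alg_term F) :
  eval_term e (term_sum t) = \sum_i eval_term e (t i).
Proof.
rewrite /term_sum; elim: (index_enum I) => [|x s /= ->].
  by rewrite big_nil.
by rewrite big_cons.
Qed.

Lemma eval_matrix_units_formula (e : nat -> A) :
  eval_qf e matrix_units_formula
  <-> matrix_units (fun i j : 'I_N => e (i * N + j)%N).
Proof.
split=> [[E_mul E_sum] | [E_mul E_sum]]; split.
- move=> i j k l; move/eval_qf_all/(_ i)/eval_qf_all/(_ j): E_mul.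
  by move/eval_qf_all/(_ k)/eval_qf_all/(_ l) => /=; case: (j == k).
- by move: E_sum => /=; rewrite eval_term_sum.
- apply/eval_qf_all => i; apply/eval_qf_all => j.
  apply/eval_qf_all => k; apply/eval_qf_all => l => /=.
  by rewrite E_mul; case: (j == k).
- by rewrite /= eval_term_sum.
Qed.

Lemma matrix_units_formula_sat :
  (exists e : nat -> A, eval_qf e matrix_units_formula)
  <-> exists E : 'I_N -> 'I_N -> A, matrix_units E.
Proof.
split=> [[e /eval_matrix_units_formula E_units] | [E E_units]].
  by eexists; exact: E_units.
pose e x := E (inord (x %/ N)) (inord (x %% N)).
have e_unit_var (i j : 'I_N) : e (i * N + j)%N = E i j.
  by rewrite /e divnMDl // modnMDl divn_small // modn_small // addn0 !inord_val.
exists e; apply/eval_matrix_units_formula; case: E_units => E_mul E_sum.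
split=> [i j k l | ].
  by rewrite !e_unit_var E_mul; case: (j == k); rewrite ?e_unit_var.
by rewrite -E_sum; apply: eq_bigr => i _; rewrite e_unit_var.
Qed.

End MatrixUnitsFormula.

Theorem lemma1 (F : fieldType) (n : nat) (hn : (1 <= n)%N) :
  exists phi : qf_formula F,
    forall A : algType F,
      locally_matrix A -> (holds_universal A phi <-> ~ in_D A n).
Proof.
case: n hn => // m _.
exists (FNot (matrix_units_formula F m)) => A A_locally_matrix.
have [k [f [f_emb _]]] := A_locally_matrix [::].
have [in_D_units units_in_D] :=
  in_D_matrix_units m (mx_embedding_nontrivial f_emb).
have [sat_units units_sat] := matrix_units_formula_sat m A.
split=> [phi_holds /in_D_units /units_sat [e e_sat] | not_in_D e e_sat].
  exact: phi_holds e e_sat.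
by apply/not_in_D/units_in_D/sat_units; exists e.
Qed.
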